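(* Let $n\ge1$ and $1\le k\le n$. With $F_k$, $\Omega$ and $\mathcal I$ as in the context, $\Omega F_k\equiv\big(4nk-2k(k-1)\big)F_k\pmod{\mathcal I}$.
   Context: Let $\mathbb C[\mathrm{Mat}_{2n}^{\mathbb R}]$ be the ring of complex polynomials in the real and imaginary parts of the entries of $Z=(z_{a,b})\in M_{2n}(\mathbb C)$, viewed as polynomials in $z_{a,b},\bar z_{a,b}$. For $1\le j,l\le 2n$, $\Phi_{jl}=\sum_{i=1}^n z_{j,i}\bar z_{l,i}$, and $F_k=\sum_{s}\mathrm{sgn}(s)\,\Phi_{1,s(1)+1}\Phi_{3,s(3)+1}\cdots\Phi_{2k-1,s(2k-1)+1}$, where $s$ runs over the permutations of $\{1,3,\dots,2k-1\}$. $\mathcal I$ is the kernel of restriction to $\mathrm U_{2n}$; $P_1\equiv P_2\pmod{\mathcal I}$ means they agree on $\mathrm U_{2n}$. For $1\le\alpha,\beta\le 2n$ let $E_{\alpha\beta}$ act by $\sum_{\gamma=1}^{2n}\big(z_{\gamma,\alpha}\frac{\partial}{\partial z_{\gamma,\beta}}-\bar z_{\gamma,\beta}\frac{\partial}{\partial\bar z_{\gamma,\alpha}}\big)$, $H_\gamma=E_{\gamma\gamma}$, and $\Omega=\sum_{\gamma}H_\gamma^2+\sum_{\alpha<\beta}(E_{\alpha\beta}E_{\beta\alpha}+E_{\beta\alpha}E_{\alpha\beta})$. *)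

From HB Require Import structures.
From mathcomp Require Import all_boot all_order all_algebra all_fingroup.
From mathcomp Require Import complex.
From mathcomp Require Import mpoly.
Set Implicit Arguments. Unset Strict Implicit. Unset Printing Implicit Defensive.
Import Order.TTheory GRing.Theory Num.Theory.
Local Open Scope ring_scope.

(* Complex numbers are modelled as R[i] = complex R for a real closed field R
   (e.g. the real numbers). Matrices have size m = 2n, indices are 0-based:
   paper index a corresponds to our index a-1. *)

Section Defs.
Variable R : rcfType.
Local Notation C := R[i].
Variable n : nat.

(* variable indices: (false,a,b) is z_{a,b}, (true,a,b) is zbar_{a,b} *)
Definition VarT := (bool * 'I_(n.*2) * 'I_(n.*2))%type.
Definition NV := #|{: VarT}|.
Definition Pol := {mpoly C[NV]}.

Definition zv (a b : 'I_(n.*2)) : Pol := 'X_(enum_rank ((false, a, b) : VarT)).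
Definition zbv (a b : 'I_(n.*2)) : Pol := 'X_(enum_rank ((true, a, b) : VarT)).
Definition dz (a b : 'I_(n.*2)) (P : Pol) : Pol := mderiv (enum_rank ((false, a, b) : VarT)) P.
Definition dzb (a b : 'I_(n.*2)) (P : Pol) : Pol := mderiv (enum_rank ((true, a, b) : VarT)) P.

Definition zn (c : bool) (a b : nat) : Pol :=
  match (insub a : option 'I_(n.*2)), (insub b : option 'I_(n.*2)) with
  | Some a', Some b' => 'X_(enum_rank ((c, a', b') : VarT))
  | _, _ => 0
  end.

Definition Phi (j l : nat) : Pol :=
  \sum_(i < n) zn false j i * zn true l i.

(* F_k = sum_{s perm of {1,3,..,2k-1}} sgn(s) prod_t Phi_{2t-1, s(2t-1)+1};
   writing s(2t-1) = 2 sigma(t) - 1 with sigma in S_k (an order-preserving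
   relabelling, so sgn s = sgn sigma), and passing to 0-based indices:
   Phi_{2t, 2 sigma(t) + 1} for t = 0..k-1. *)
Definition Fk (k : nat) : Pol :=
  \sum_(s : 'S_k) (-1) ^+ s * \prod_(t < k) Phi (2 * t) (2 * s t + 1).

Definition Eop (al be : 'I_(n.*2)) (P : Pol) : Pol :=
  \sum_(g < n.*2) (zv g al * dz g be P - zbv g be * dzb g al P).

Definition Hop (g : 'I_(n.*2)) (P : Pol) : Pol := Eop g g P.

Definition Omega (P : Pol) : Pol :=
  \sum_(g < n.*2) Hop g (Hop g P)
  + \sum_(al < n.*2) \sum_(be < n.*2 | (al < be)%N)
      (Eop al be (Eop be al P) + Eop be al (Eop al be P)).

Definition evZ (Z : 'M[C]_(n.*2)) (v : 'I_NV) : C :=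
  let: (c, a, b) := enum_val v in if c then (Z a b)^* else Z a b.

Definition unitary (Z : 'M[C]_(n.*2)) : Prop :=
  Z *m (map_mx Num.conj Z)^T = 1%:M.

(* P1 = P2 mod I, I = kernel of restriction to U_{2n} *)
Definition eqmodI (P1 P2 : Pol) : Prop :=
  forall Z : 'M[C]_(n.*2), unitary Z -> P1.@[evZ Z] = P2.@[evZ Z].

End Defs.

From HB Require Import structures.
From mathcomp Require Import all_boot all_order all_algebra all_fingroup.
From mathcomp Require Import complex mpoly.
From mathcomp Require Import ring zify.
Set Implicit Arguments.
Unset Strict Implicit.
Unset Printing Implicit Defensive.
Import GRing.Theory Num.Theory.
Local Open Scope ring_scope.

(* Omega is the sum of E_{al be} E_{be al} over all ordered pairs (al, be), and
   each E_{al be} is a derivation acting on Phi_{jl} by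
   (chi be - chi al) z_{j al} zbar_{l be}, chi being the indicator of the first
   n columns.  Applying the Leibniz rule twice to a product of factors
   Phi_{r_t c_t} whose row indices r_t are even and column indices c_t odd,
   and using that the rows of a unitary Z are orthonormal (no row index equals
   a column index, so the Kronecker deltas vanish), a factor hit twice becomes
   4n Phi_{jl}, while two distinct factors s, t hit once each become
   2 Phi_{r_s c_t} Phi_{r_t c_s}: their columns are swapped.  In the
   alternating sum F_k each swap is a transposition and contributes -F_k, once
   for each of the k(k-1) ordered pairs, whence 4nk - 2k(k-1). *)

Section Leibniz.
Variable V : comNzRingType.

Definition leibniz (D : V -> V) := forall p q, D (p * q) = D p * q + p * D q.

Lemma leibniz1 (D : {additive V -> V}) : leibniz D -> D 1 = 0.
Proof.
move=> DM; apply/eqP; have /esym/eqP := DM 1 1.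
by rewrite !(mulr1, mul1r) -subr_eq0 addrK.
Qed.

Lemma leibniz_prod (D : {additive V -> V}) (I : eqType) (r : seq I) (f : I -> V) :
  leibniz D -> uniq r ->
  D (\prod_(i <- r) f i) = \sum_(t <- r) \prod_(i <- r) (if i == t then D (f i) else f i).
Proof.
move=> DM; elim: r => [_|x r IH /= /andP[xNr r_uniq]]; first by rewrite !big_nil leibniz1.
rewrite !big_cons DM IH // eqxx mulr_sumr; congr (_ * _ + _).
  by apply: eq_big_seq => i ir; rewrite ifN //; apply: contraNneq xNr => <-.
by apply: eq_big_seq => t tr; rewrite big_cons ifN //; apply: contraNneq xNr => ->.
Qed.

Lemma leibniz2_prod (D1 D2 : {additive V -> V}) (I : finType) (f : I -> V) :
  leibniz D1 -> leibniz D2 ->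
  D1 (D2 (\prod_i f i)) =
    \sum_t D1 (D2 (f t)) * \prod_(i | i != t) f i
  + \sum_t \sum_(s | s != t) D1 (f s) * D2 (f t) * \prod_(i | (i != s) && (i != t)) f i.
Proof.
move=> D1M D2M; rewrite leibniz_prod ?index_enum_uniq // raddf_sum -big_split.
apply: eq_bigr => t _ /=; rewrite leibniz_prod ?index_enum_uniq // (bigD1 t) //=.
congr (_ + _).
  rewrite (bigD1 t) //= !eqxx; congr (_ * _).
  by apply: eq_bigr => i /negbTE ->.
apply: eq_bigr => s st; rewrite (bigD1 s) //= (bigD1 t) 1?eq_sym //= !eqxx.
rewrite eq_sym (negbTE st) mulrA; congr (_ * _).
by apply: eq_bigr => i /andP[/negbTE -> /negbTE ->].
Qed.

End Leibniz.

Section PairSums.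
Variables (K : comPzRingType) (I : finType).

Let sum_pairsM (F G : I -> K) : \sum_a \sum_b F a * G b = (\sum_a F a) * \sum_b G b.
Proof. by rewrite big_distrlr. Qed.

Lemma sum_pairs_diffM (w u : I -> K) :
  \sum_a \sum_b (w a - w b) * (u a - u b) =
  2 * (#|I|%:R * \sum_a w a * u a - (\sum_a w a) * \sum_a u a).
Proof.
have expand a b : (w a - w b) * (u a - u b) =
    (w a * u a + w b * u b) - (w a * u b + w b * u a) by ring.
under eq_bigr do under eq_bigr do rewrite expand.
under eq_bigr do rewrite sumrB !big_split /=.
rewrite sumrB !big_split /= sum_pairsM [X in - (_ + X)]exchange_big sum_pairsM /=.
have sum_const (x : K) : \sum_(i : I) x = #|I|%:R * x by rewrite sumr_const mulr_natl.
rewrite sum_const (eq_bigr _ (fun i _ => sum_const _)) -mulr_sumr; ring.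
Qed.

Lemma sum_pairs_sqr_diffM (w u v : I -> K) : (forall a, w a ^+ 2 = w a) ->
  \sum_a \sum_b (w a - w b) ^+ 2 * (u a * v b) =
    (\sum_a w a * u a) * (\sum_b v b) + (\sum_a u a) * (\sum_b w b * v b)
  - 2 * (\sum_a w a * u a) * (\sum_b w b * v b).
Proof.
move=> w_idem; have expand a b : (w a - w b) ^+ 2 * (u a * v b) =
    (w a * u a) * v b + u a * (w b * v b) - (2 * (w a * u a)) * (w b * v b).
  by rewrite sqrrB !w_idem; ring.
under eq_bigr do under eq_bigr do rewrite expand.
under eq_bigr do rewrite sumrB big_split /=.
by rewrite sumrB big_split /= !sum_pairsM -mulr_sumr.
Qed.

End PairSums.

Lemma exchange_big_pair (V : nmodType) (I J : finType) (P : pred J) (F : I -> I -> J -> V) :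
  \sum_a \sum_b \sum_(c | P c) F a b c = \sum_(c | P c) \sum_a \sum_b F a b c.
Proof. by under eq_bigr do rewrite exchange_big; rewrite exchange_big. Qed.

Lemma sum_pairs_mulr (K : pzSemiRingType) (I : finType) (F : I -> I -> K) (x : K) :
  \sum_a \sum_b F a b * x = (\sum_a \sum_b F a b) * x.
Proof. by rewrite mulr_suml; under [RHS]eq_bigr do rewrite mulr_suml. Qed.

Lemma sum_pairs_mull (K : pzSemiRingType) (I : finType) (F : I -> I -> K) (x : K) :
  \sum_a \sum_b x * F a b = x * \sum_a \sum_b F a b.
Proof. by rewrite mulr_sumr; under [RHS]eq_bigr do rewrite mulr_sumr. Qed.

Lemma sum_pairs_diag_lt (V : nmodType) (N : nat) (T : 'I_N -> 'I_N -> V) :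
  \sum_a \sum_b T a b =
  \sum_g T g g + \sum_(a : 'I_N) \sum_(b : 'I_N | (a < b)%N) (T a b + T b a).
Proof.
rewrite [X in _ + X](eq_bigr _ (fun a _ => big_split _ _ _ _ _)) big_split /= addrA.
rewrite [X in _ + X](exchange_big_dep predT) //= -big_split -big_split /=.
apply: eq_bigr => a _; rewrite (bigD1 a) //= (bigID (fun b : 'I_N => (a < b)%N)) /= addrA.
congr (_ + _ + _); apply: eq_bigl => b; rewrite -val_eqE /=.
  by case: ltngtP.
by case: ltngtP.
Qed.

Lemma sum_sign_tpermM (K : pzRingType) (T : finType) (g : {perm T} -> K) (s t : T) :
  s != t ->
  \sum_(p : {perm T}) (-1) ^+ p * g (tperm s t * p)%g = - \sum_(p : {perm T}) (-1) ^+ p * g p.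
Proof.
move=> st; rewrite (reindex_inj (mulgI (tperm s t))) -sumrN; apply: eq_bigr => p _.
by rewrite tpermKg odd_permM odd_tperm st signr_addb mulN1r mulNr.
Qed.

Lemma sum_sign_tperm_pairs (K : comPzRingType) (T : finType) (g : {perm T} -> K) :
  \sum_(p : {perm T}) (-1) ^+ p * \sum_t \sum_(s | s != t) g (tperm s t * p)%g =
  - (#|T| * #|T|.-1)%:R * \sum_(p : {perm T}) (-1) ^+ p * g p.
Proof.
under eq_bigr do rewrite mulr_sumr; rewrite exchange_big /=.
under eq_bigr do (under eq_bigr do rewrite mulr_sumr; rewrite exchange_big /=).
under eq_bigr => t _ do under eq_bigr => s st do rewrite sum_sign_tpermM //.
have sum_neq_const (t : T) (x : K) : \sum_(s | s != t) x = x *+ #|T|.-1.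
  by rewrite -(cardC1 t) -sumr_const.
rewrite (eq_bigr _ (fun t _ => sum_neq_const t _)) sumr_const.
by rewrite -mulrnA mulNrn mulNr mulr_natl mulnC.
Qed.

Lemma mderivXU (R : nzRingType) (N : nat) (i j : 'I_N) :
  mderiv i ('X_j : {mpoly R[N]}) = (i == j)%:R.
Proof.
rewrite mderivX mnm1E; have [->|_] := eqVneq i j; last by rewrite scale0r.
have -> : (U_(j) - U_(j))%MM = 0%MM by apply/mnmP => l; rewrite mnmBE subnn mnm0E.
by rewrite mpolyX0 scale1r.
Qed.

Lemma sum_ord_delta (V : pzSemiRingType) (N c : nat) (F : nat -> V) :
  \sum_(i < N) (i == c :> nat)%:R * F i = (c < N)%:R * F c.
Proof.
case: (ltnP c N) => [cN|Nc].
  rewrite (bigD1 (Ordinal cN)) //= eqxx big1 ?addr0 // => i.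
  by rewrite -val_eqE => /negbTE ->; rewrite mul0r.
by rewrite mul0r big1 // => i _; rewrite ltn_eqF ?mul0r // (leq_trans _ Nc).
Qed.

Lemma sum_ord_lt (V : pzSemiRingType) (N n : nat) : (n <= N)%N ->
  \sum_(g < N) (g < n)%N%:R = n%:R :> V.
Proof.
move=> nN; transitivity (\sum_(g < n) (1 : V)); last by rewrite sumr_const card_ord.
rewrite (big_ord_widen N (fun _ => 1 : V) nN) [RHS]big_mkcond.
by apply: eq_bigr => g _; case: (g < n)%N.
Qed.

Section Operators.
Variables (R : rcfType) (n : nat).
Local Notation C := R[i].
Local Notation m := n.*2.
Local Notation Pol := (Pol R n).
Local Notation zn := (zn R n).
Local Notation Eop := (@Eop R n).
Local Notation X c a b := ('X_(enum_rank ((c, a, b) : VarT n))).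

Lemma Eop_is_linear (al be : 'I_m) : linear (Eop al be).
Proof.
move=> c p q; rewrite /Eop scaler_sumr -big_split; apply: eq_bigr => g _ /=.
by rewrite /dz /dzb !linearP /= !mulrDr -!scalerAr scalerBr opprD addrACA.
Qed.

HB.instance Definition _ al be :=
  GRing.isLinear.Build C Pol Pol _ (Eop al be) (Eop_is_linear al be).

Lemma EopM (al be : 'I_m) (p q : Pol) :
  Eop al be (p * q) = Eop al be p * q + p * Eop al be q.
Proof.
rewrite /Eop mulr_suml mulr_sumr -big_split; apply: eq_bigr => g _ /=.
rewrite /dz /dzb !mderivM; ring.
Qed.

Lemma Eop_X (al be : 'I_m) (c : bool) (a b : 'I_m) :
  Eop al be (X c a b) =
  if c then - ((b == al)%:R * X true a be) else (b == be)%:R * X false a al.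
Proof.
rewrite /Eop (bigD1 a) //= big1 ?addr0 => [|g ga].
  rewrite /dz /dzb !mderivXU !(inj_eq enum_rank_inj) !xpair_eqE !eqxx.
  by case: c; rewrite /= mulr0 ?subr0 ?sub0r mulrC eq_sym.
rewrite /dz /dzb !mderivXU !(inj_eq enum_rank_inj) !xpair_eqE.
by rewrite (negbTE ga) !(andbF, andFb) !mulr0 subrr.
Qed.

Lemma znE c (a b : 'I_m) : zn c a b = X c a b.
Proof. by rewrite /zn !valK. Qed.

Lemma zn_out c (a b : nat) : ((m <= a) || (m <= b))%N -> zn c a b = 0.
Proof.
rewrite /zn => /orP abm; case: insubP => [a' am _|//]; case: insubP => [b' bm _|//].
by case: abm; rewrite leqNgt ?am ?bm.
Qed.

Lemma Eop_zn (al be : 'I_m) c (a b : nat) :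
  Eop al be (zn c a b) =
  if c then - ((b == al :> nat)%:R * zn true a be) else (b == be :> nat)%:R * zn false a al.
Proof.
case: (ltnP a m) => [am|ma]; last by rewrite !zn_out ?ma // raddf0 !mulr0 oppr0; case: c.
case: (ltnP b m) => [bm|mb]; last first.
  have bN (g : 'I_m) : (b == g :> nat) = false.
    exact: gtn_eqF (leq_trans (ltn_ord g) mb).
  by rewrite zn_out ?mb ?orbT // raddf0 !bN !mul0r oppr0; case: c.
rewrite -[a]/(val (Ordinal am)) -[b]/(val (Ordinal bm)) !znE.
exact: (Eop_X al be c (Ordinal am) (Ordinal bm)).
Qed.

Local Notation chi g := ((g < n)%N%:R : C).

Lemma Eop_Phi (al be : 'I_m) (j l : nat) :
  Eop al be (Phi R n j l) = (chi be - chi al) *: (zn false j al * zn true l be).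
Proof.
rewrite /Phi raddf_sum /=; under eq_bigr do rewrite EopM !Eop_zn /=.
rewrite big_split /=.
under eq_bigr do rewrite -mulrA.
under [S in _ + S]eq_bigr do rewrite mulrN mulrCA.
rewrite sumrN (sum_ord_delta _ _ (fun i => zn false j al * zn true l i)).
rewrite (sum_ord_delta _ _ (fun i => zn false j i * zn true l be)).
by rewrite scalerBl !scaler_nat !mulr_natl.
Qed.

Lemma Eop_Eop_Phi (al be : 'I_m) (j l : nat) :
  Eop al be (Eop be al (Phi R n j l)) =
  (chi al - chi be) *: (zn false j al * zn true l al - zn false j be * zn true l be).
Proof. by rewrite Eop_Phi linearZ /= EopM !Eop_zn /= !eqxx !mul1r mulrN. Qed.

End Operators.

Lemma OmegaE (R : rcfType) (n : nat) (P : Pol R n) :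
  Omega P = \sum_al \sum_be Eop al be (Eop be al P).
Proof. by rewrite sum_pairs_diag_lt. Qed.

Section Unitary.
Variables (R : rcfType) (n : nat).
Local Notation C := R[i].
Local Notation m := n.*2.
Local Notation zn := (zn R n).
Local Notation Eop := (@Eop R n).
Local Notation Phi := (Phi R n).
Local Notation chi g := ((g < n)%N%:R : C).
Variables (Z : 'M[C]_m) (Z_unitary : unitary Z).
Local Notation ev p := (meval (evZ Z) p).

Let n_le_m : (n <= m)%N.
Proof. by rewrite -addnn leq_addr. Qed.

Lemma ev_zn c (a b : 'I_m) : ev (zn c a b) = if c then (Z a b)^* else Z a b.
Proof. by rewrite znE mevalXU /evZ enum_rankK. Qed.

Lemma unitary_rows_dot (j l : nat) : (j < m)%N -> (l < m)%N ->
  \sum_(g < m) ev (zn false j g) * ev (zn true l g) = (j == l)%:R.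
Proof.
move=> jm lm; have := congr1 (fun M : 'M[C]_m => M (Ordinal jm) (Ordinal lm)) Z_unitary.
rewrite !mxE /= => <-; apply: eq_bigr => g _.
by rewrite -[j]/(val (Ordinal jm)) -[l]/(val (Ordinal lm)) !ev_zn !mxE.
Qed.

Lemma ev_Phi (j l : nat) :
  ev (Phi j l) = \sum_(g < m) chi g * (ev (zn false j g) * ev (zn true l g)).
Proof.
rewrite /Phi rmorph_sum /= (big_ord_widen m (fun g => ev (zn false j g * zn true l g)) n_le_m).
rewrite big_mkcond; apply: eq_bigr => g _; rewrite rmorphM.
by case: (g < n)%N; rewrite ?(mul1r, mul0r).
Qed.

Lemma sum_ev_Eop_Eop_Phi (j l : nat) : (j < m)%N -> (l < m)%N -> j != l ->
  \sum_al \sum_be ev (Eop al be (Eop be al (Phi j l))) = (4 * n)%:R * ev (Phi j l).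
Proof.
move=> jm lm jl; pose u g := ev (zn false j g) * ev (zn true l g).
under eq_bigr do under eq_bigr do rewrite Eop_Eop_Phi mevalZ rmorphB /= !rmorphM.
rewrite (sum_pairs_diffM (fun g : 'I_m => chi g) u) card_ord sum_ord_lt //.
rewrite /u unitary_rows_dot // (negbTE jl) mulr0 subr0 -ev_Phi mulrA -natrM.
by rewrite -mul2n mulnA.
Qed.

Lemma sum_ev_Eop_Phi_Eop_Phi (j l j' l' : nat) :
  (j < m)%N -> (l < m)%N -> (j' < m)%N -> (l' < m)%N -> j != l' -> j' != l ->
  \sum_al \sum_be ev (Eop al be (Phi j l)) * ev (Eop be al (Phi j' l')) =
  2 * ev (Phi j l') * ev (Phi j' l).
Proof.
move=> jm lm j'm l'm jl' j'l.
pose u g := ev (zn false j g) * ev (zn true l' g).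
pose v g := ev (zn false j' g) * ev (zn true l g).
have chi2 (g : 'I_m) : chi g ^+ 2 = chi g by case: (g < n)%N; rewrite ?expr1n ?expr0n.
transitivity (- \sum_(al : 'I_m) \sum_(be : 'I_m) (chi al - chi be) ^+ 2 * (u al * v be)).
  rewrite -sumrN; apply: eq_bigr => al _; rewrite -sumrN; apply: eq_bigr => be _.
  by rewrite !Eop_Phi !mevalZ !rmorphM /= /u /v; ring.
rewrite (sum_pairs_sqr_diffM _ _ chi2) !unitary_rows_dot // (negbTE jl') (negbTE j'l).
by rewrite mulr0 mul0r add0r sub0r opprK !ev_Phi.
Qed.

End Unitary.

Section ProductsOfPhi.
Variables (R : rcfType) (n : nat).
Local Notation C := R[i].
Local Notation m := n.*2.
Local Notation Eop := (@Eop R n).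
Local Notation Phi := (Phi R n).
Variables (Z : 'M[C]_m) (Z_unitary : unitary Z).
Local Notation ev p := (meval (evZ Z) p).
Variables (k : nat) (r c : 'I_k -> nat).
Hypotheses (r_lt : forall u, (r u < m)%N) (c_lt : forall u, (c u < m)%N).
Hypothesis r_neq_c : forall u v, r u != c v.

Lemma sum_ev_Eop_Eop_prod_Phi :
  \sum_al \sum_be ev (Eop al be (Eop be al (\prod_u Phi (r u) (c u)))) =
    (4 * n * k)%:R * \prod_u ev (Phi (r u) (c u))
  + 2 * \sum_t \sum_(s | s != t) \prod_u ev (Phi (r u) (c (tperm s t u))).
Proof.
transitivity (\sum_(al : 'I_m) \sum_(be : 'I_m) (
     \sum_t ev (Eop al be (Eop be al (Phi (r t) (c t))))
       * \prod_(i | i != t) ev (Phi (r i) (c i))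
   + \sum_t \sum_(s | s != t) ev (Eop al be (Phi (r s) (c s))) * ev (Eop be al (Phi (r t) (c t)))
       * \prod_(i | (i != s) && (i != t)) ev (Phi (r i) (c i)))).
  apply: eq_bigr => al _; apply: eq_bigr => be _.
  have leibniz2 := @leibniz2_prod _ (Eop al be) (Eop be al) _ (fun u => Phi (r u) (c u))
    (EopM al be) (EopM be al).
  (* rewriting with [leibniz2] instead would be very slow: the matching has to
     see through the additive structures built on [Eop] *)
  apply: eq_trans (congr1 _ leibniz2) _.
  rewrite rmorphD !rmorph_sum; congr (_ + _); apply: eq_bigr => t _.
    by rewrite rmorphM rmorph_prod.
  by rewrite rmorph_sum; apply: eq_bigr => s _; rewrite !rmorphM rmorph_prod.
rewrite (eq_bigr _ (fun al _ => big_split _ _ _ _ _)) big_split /=; congr (_ + _).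
  rewrite (exchange_big_pair xpredT).
  transitivity (\sum_(t : 'I_k) (4 * n)%:R * \prod_u ev (Phi (r u) (c u))).
    apply: eq_bigr => t _; rewrite sum_pairs_mulr sum_ev_Eop_Eop_Phi //.
    by rewrite [in RHS](bigD1 t) //= mulrA.
  by rewrite sumr_const card_ord -[_ *+ k]mulr_natl mulrA -natrM mulnC.
rewrite (exchange_big_pair xpredT) mulr_sumr; apply: eq_bigr => t _.
rewrite (exchange_big_pair (fun s => s != t)) mulr_sumr; apply: eq_bigr => s st.
rewrite sum_pairs_mulr sum_ev_Eop_Phi_Eop_Phi //.
rewrite [in RHS](bigD1 s) //= [in RHS](bigD1 t) 1?eq_sym //= tpermL tpermR !mulrA.
congr (_ * _); apply: eq_bigr => i /andP[si ti].
by rewrite tpermD // eq_sym.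
Qed.

End ProductsOfPhi.

Section OmegaFk.
Variables (R : rcfType) (n k : nat).
Hypothesis k_le_n : (k <= n)%N.
Local Notation C := R[i].
Local Notation m := n.*2.
Local Notation Eop := (@Eop R n).
Local Notation Phi := (Phi R n).
Variables (Z : 'M[C]_m) (Z_unitary : unitary Z).
Local Notation ev p := (meval (evZ Z) p).
Local Notation term p := (\prod_(t < k) ev (Phi (2 * t) (2 * (p : 'S_k) t + 1))).

Lemma ev_Fk : ev (Fk R n k) = \sum_(p : 'S_k) (-1) ^+ p * term p.
Proof.
by rewrite rmorph_sum; apply: eq_bigr => p _; rewrite rmorphM rmorph_sign rmorph_prod.
Qed.

Lemma sum_ev_Eop_Eop_prod_Phi_perm (p : 'S_k) :
  \sum_al \sum_be ev (Eop al be (Eop be al (\prod_(t < k) Phi (2 * t) (2 * p t + 1)))) =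
  (4 * n * k)%:R * term p + 2 * \sum_t \sum_(s | s != t) term (tperm s t * p)%g.
Proof.
rewrite (@sum_ev_Eop_Eop_prod_Phi _ _ _ Z_unitary _ (fun t => 2 * t)%N (fun t => 2 * p t + 1)%N).
- congr (_ + 2 * _); apply: eq_bigr => t _; apply: eq_bigr => s _.
  by apply: eq_bigr => u _; rewrite permM.
- by move=> t; have := ltn_ord t; lia.
- by move=> t; have := ltn_ord (p t); lia.
- by move=> t u; apply/eqP; lia.
Qed.

Lemma ev_Eop_Eop_Fk (al be : 'I_m) :
  ev (Eop al be (Eop be al (Fk R n k))) =
  \sum_(p : 'S_k) (-1) ^+ p * ev (Eop al be (Eop be al (\prod_(t < k) Phi (2 * t) (2 * p t + 1)))).
Proof.
rewrite /Fk [Eop be al _]raddf_sum /= [Eop al be _]raddf_sum /= rmorph_sum /=.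
apply: eq_bigr => p _; rewrite !mulr_sign.
by case: (odd_perm p); rewrite ?raddfN ?rmorphN.
Qed.

Lemma ev_Omega_Fk :
  ev (Omega (Fk R n k)) = ((4 * n * k)%:R - (2 * k * (k - 1))%:R) * ev (Fk R n k).
Proof.
transitivity (\sum_(al : 'I_m) \sum_(be : 'I_m) \sum_(p : 'S_k)
    (-1) ^+ p * ev (Eop al be (Eop be al (\prod_(t < k) Phi (2 * t) (2 * p t + 1))))).
  rewrite OmegaE rmorph_sum; apply: eq_bigr => al _; rewrite rmorph_sum; apply: eq_bigr => be _.
  exact: ev_Eop_Eop_Fk.
transitivity (\sum_(p : 'S_k) (-1) ^+ p *
    ((4 * n * k)%:R * term p + 2 * \sum_t \sum_(s | s != t) term (tperm s t * p)%g)).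
  rewrite (exchange_big_pair xpredT); apply: eq_bigr => p _.
  rewrite sum_pairs_mull; congr (_ * _); exact: sum_ev_Eop_Eop_prod_Phi_perm.
under eq_bigr do rewrite mulrDr mulrCA [X in _ + X]mulrCA.
rewrite big_split /= -!mulr_sumr (sum_sign_tperm_pairs (fun p => term p)) card_ord -ev_Fk.
by rewrite mulrBl mulrA mulrN -natrM mulnA subn1 mulNr.
Qed.

End OmegaFk.

Theorem theorem3p7 (R : rcfType) (n k : nat) :
  (1 <= n)%N -> (1 <= k <= n)%N ->
  eqmodI (Omega (Fk R n k))
         (((4 * n * k)%:R - (2 * k * (k - 1))%:R) *: Fk R n k).
Proof.
move=> _ /andP[_ k_le_n] Z Z_unitary.
by rewrite mevalZ ev_Omega_Fk.
Qed.
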